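(* Consider MDVI$(\alpha,K,M)$ with any $\alpha\in[0,1)$ and any positive integers $K,M$, on an MDP as in the context. Then, for every realization of the samples and every $k\in\{1,\dots,K\}$, $$0 \leq v^* - v^{\pi'_k} \leq \Gamma_k,\qquad \Gamma_k := \frac{1}{A_\infty}\sum_{j=0}^{k-1}\gamma^j\left(\pi_k P_{k-j}^{k-1} - \pi_* P_*^j\right)E_{k-j} + 2H\left(\alpha^k + \frac{A_{\gamma,k}}{A_\infty}\right)\mathbf{1},$$ where inequalities between vectors are componentwise.
   Context: MDP: finite state set $\mathcal{X}$, finite action set $\mathcal{A}$, discount $\gamma\in[0,1)$, reward $r \in [-1,1]^{\mathcal{X}\times\mathcal{A}}$, transition kernel $P(y|x,a)$, $H=1/(1-\gamma)$. $P$ is viewed as a matrix in $\mathbb{R}^{(\mathcal{X}\times\mathcal{A})\times\mathcal{X}}$, $(Pv)(x,a)=\sum_yP(y|x,a)v(y)$; a policy $\pi$ is viewed as a matrix in $\mathbb{R}^{\mathcal{X}\times(\mathcal{X}\times\mathcal{A})}$, $(\pi q)(x)=\sum_a\pi(a|x)q(x,a)$; $P^\pi := P\pi$; $T^\pi q = r+\gamma P^\pi q$; $q^\pi$ its fixed point, $v^\pi=\pi q^\pi$; $\pi_*$ is an optimal policy, $v^*=v^{\pi_*}$. $\mathbf{1}$ is the all-ones vector. MDVI$(\alpha,K,M)$: $s_0 = 0$, $w_0=w_{-1}=0$; for $k=0,\dots,K-1$: $v_k = w_k-\alpha w_{k-1}$; for each $(x,a)$, independent samples $y_{k,m,x,a}\sim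 P(\cdot|x,a)$, $m\in[M]$; $q_{k+1}(x,a) = r(x,a)+\frac{\gamma}{M}\sum_m v_k(y_{k,m,x,a})$; $s_{k+1}=q_{k+1}+\alpha s_k$; $w_{k+1}(x)=\max_a s_{k+1}(x,a)$. $\pi_k$ ($k=0,\dots,K$) is a deterministic greedy policy w.r.t. $s_k$. Notation: $\widehat P_k v(x,a) = \frac1M\sum_m v(y_{k,m,x,a})$; $\varepsilon_k = \gamma\widehat P_{k-1}v_{k-1} - \gamma P v_{k-1}$ for $k\in[K]$; $E_k = \sum_{j=1}^k \alpha^{k-j}\varepsilon_j$. $A_\infty = 1/(1-\alpha)$, $A_{\gamma,k} = \sum_{j=0}^{k-1}\gamma^{k-j}\alpha^j$. For $i\ge j$, $P_j^i := P^{\pi_i}P^{\pi_{i-1}}\cdots P^{\pi_j}$, and $P_j^i := I$ if $i<j$; $P_*^j := (P^{\pi_*})^j$. $\pi'_k$ is the non-stationary policy following $\pi_{k-t}$ at time step $t\le k$ and $\pi_0$ afterwards, with value $v^{\pi'_k} = \pi_kT^{\pi_{k-1}}\cdots T^{\pi_1}q^{\pi_0}$. *)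

From HB Require Import structures.
From mathcomp Require Import all_boot all_order all_algebra.
From mathcomp Require Import all_classical all_reals all_analysis.
Set Implicit Arguments. Unset Strict Implicit. Unset Printing Implicit Defensive.
Import Order.TTheory GRing.Theory Num.Theory numFieldNormedType.Exports.
Local Open Scope ring_scope.

Section MDP.
Variables (R : realType) (X A : finType).

(* transition kernel: P x a y = P(y | x, a); policy: pi x a = pi(a | x) *)

Definition Papp (P : X -> A -> X -> R) (v : X -> R) : X -> A -> R :=
  fun x a => \sum_(y : X) P x a y * v y.

Definition polapp (pi : X -> A -> R) (q : X -> A -> R) : X -> R :=
  fun x => \sum_(a : A) pi x a * q x a.

Definition Ppi (P : X -> A -> X -> R) (pi : X -> A -> R) (q : X -> A -> R) :
  X -> A -> R := Papp P (polapp pi q).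

Definition Tpi (P : X -> A -> X -> R) (r : X -> A -> R) (gamma : R)
  (pi : X -> A -> R) (q : X -> A -> R) : X -> A -> R :=
  fun x a => r x a + gamma * Ppi P pi q x a.

(* q^pi: fixed point of T^pi, obtained as the (pointwise) limit of value
   iteration started from 0, i.e. the discounted sum of rewards. *)
Definition qpi P r gamma (pi : X -> A -> R) : X -> A -> R :=
  fun x a => limn (fun n : nat => iter n (Tpi P r gamma pi) (fun _ _ => 0) x a).

Definition vpi P r gamma (pi : X -> A -> R) : X -> R :=
  polapp pi (qpi P r gamma pi).

Definition is_policy (pi : X -> A -> R) : Prop :=
  (forall x a, 0 <= pi x a) /\ (forall x, \sum_(a : A) pi x a = 1).

Definition is_kernel (P : X -> A -> X -> R) : Prop :=
  (forall x a y, 0 <= P x a y) /\ (forall x a, \sum_(y : X) P x a y = 1).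

Definition is_optimal P r gamma (pistar : X -> A -> R) : Prop :=
  is_policy pistar /\
  forall pi, is_policy pi -> forall x, vpi P r gamma pi x <= vpi P r gamma pistar x.

Definition detpol (d : X -> A) : X -> A -> R :=
  fun x a => if a == d x then 1 else 0.

(* max over actions (a0 only witnesses A nonempty; the value is the max) *)
Definition maxA (a0 : A) (s : X -> A -> R) : X -> R :=
  fun x => \big[Num.max/s x a0]_(a : A) s x a.

Variables (P : X -> A -> X -> R) (r : X -> A -> R) (gamma alpha : R)
          (M : nat) (a0 : A)
          (y : nat -> 'I_M -> X -> A -> X).

Definition Phat (k : nat) (v : X -> R) : X -> A -> R :=
  fun x a => M%:R^-1 * \sum_(m : 'I_M) v (y k m x a).

(* mdvi_state k = (s_k, w_k, w_{k-1}) *)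
Fixpoint mdvi_state (k : nat) : (X -> A -> R) * (X -> R) * (X -> R) :=
  match k with
  | 0 => (fun _ _ => 0, fun _ => 0, fun _ => 0)
  | k'.+1 =>
      let: (s, w, wp) := mdvi_state k' in
      let v := fun x => w x - alpha * wp x in
      let q := fun x a => r x a + gamma * Phat k' v x a in
      let s' := fun x a => q x a + alpha * s x a in
      (s', maxA a0 s', w)
  end.

Definition s_ k := (mdvi_state k).1.1.
Definition w_ k := (mdvi_state k).1.2.
Definition wprev_ k := (mdvi_state k).2.
Definition v_ k : X -> R := fun x => w_ k x - alpha * wprev_ k x.

Definition eps_ (k : nat) : X -> A -> R :=
  fun x a => gamma * Phat k.-1 (v_ k.-1) x a - gamma * Papp P (v_ k.-1) x a.

Definition E_ (k : nat) : X -> A -> R :=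
  fun x a => \sum_(1 <= j < k.+1) alpha ^+ (k - j) * eps_ j x a.

Definition A_inf : R := (1 - alpha)^-1.
Definition A_gk (k : nat) : R := \sum_(0 <= j < k) gamma ^+ (k - j) * alpha ^+ j.
Definition H : R := (1 - gamma)^-1.

Variable (g : nat -> X -> A).
Definition pol_ k := detpol (g k).

(* Pchain j n = P^{pi_{j+n-1}} ... P^{pi_j}; so P_j^i = Pchain j (i+1-j) *)
Fixpoint Pchain (j n : nat) (q : X -> A -> R) : X -> A -> R :=
  match n with
  | 0 => q
  | n'.+1 => Ppi P (pol_ (j + n')) (Pchain j n' q)
  end.

Fixpoint Tchain (n : nat) (q : X -> A -> R) : X -> A -> R :=
  match n with
  | 0 => q
  | n'.+1 => Tpi P r gamma (pol_ n'.+1) (Tchain n' q)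
  end.

(* v^{pi'_k} = pi_k T^{pi_{k-1}} ... T^{pi_1} q^{pi_0} *)
Definition v_nonstat (k : nat) : X -> R :=
  polapp (pol_ k) (Tchain k.-1 (qpi P r gamma (pol_ 0))).

Variable (pistar : X -> A -> R).

Definition Gamma_ (k : nat) : X -> R :=
  fun x =>
    A_inf^-1 * \sum_(0 <= j < k) gamma ^+ j *
       (polapp (pol_ k) (Pchain (k - j) j (E_ (k - j))) x
        - polapp pistar (iter j (Ppi P pistar) (E_ (k - j))) x)
    + 2 * H * (alpha ^+ k + A_gk k / A_inf).

End MDP.

(** Write F_k := A_k r + E_k with A_k := sum_(j<k) alpha^j.  Since w_k = pi_k s_k for the
    greedy pi_k, the MDVI update reads s_(k+1) = F_(k+1) + gamma P^(pi_k) s_k, so that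
    pi_k s_k = sum_(j<k) gamma^j pi_k P_(k-j)^(k-1) F_(k-j); the same recursion with pi_* in
    place of pi_k is a lower bound, so pi_* s_k >= sum_(j<k) gamma^j pi_* P_*^j F_(k-j), and
    greediness gives pi_* s_k <= pi_k s_k.  Hence the reward gaps weighted by A_(k-j) are
    bounded below by minus the E-terms of Gamma_k.  Unrolling v^* and v^(pi'_k) k times
    produces the same reward gaps with unit weights, plus tails of size gamma^k H.  As
    A_(k-j) = A_inf (1 - alpha^(k-j)) and each gap is at most 2 in absolute value, trading the
    unit weights for A_(k-j)/A_inf costs 2 sum_(j<k) gamma^j alpha^(k-j), which together with
    the tails is exactly 2 H (alpha^k + A_(gamma,k)/A_inf).
    The lower bound holds because q^* <= v^* pointwise (by policy improvement), so every
    Bellman operator T^pi maps functions below q^* to functions below q^*. *)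

From Pilot Require Import Defs.
From HB Require Import structures.
From mathcomp Require Import all_boot all_order all_algebra.
From mathcomp Require Import all_classical all_reals all_analysis.
From mathcomp Require Import ring lra zify.
Import Order.TTheory GRing.Theory Num.Theory numFieldNormedType.Exports.
Local Open Scope ring_scope.
Set Implicit Arguments. Unset Strict Implicit. Unset Printing Implicit Defensive.

Section GeometricBounds.
Variables (R : realType) (g : R).
Hypothesis g01 : 0 <= g < 1.

Let g_ge0 : 0 <= g. Proof. by case/andP: g01. Qed.
Let g_lt1 : g < 1. Proof. by case/andP: g01. Qed.

Lemma sum_expr_le_inv n : \sum_(0 <= j < n) g ^+ j <= (1 - g)^-1.
Proof.
have subg_gt0 : 0 < 1 - g by rewrite subr_gt0.
have telescoped : (1 - g) * \sum_(0 <= j < n) g ^+ j = 1 - g ^+ n.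
  elim: n => [|n IH]; first by rewrite big_geq // expr0 mulr0 subrr.
  by rewrite big_nat_recr //= mulrDr IH exprS; ring.
by rewrite -(ler_pM2l subg_gt0) telescoped mulfV ?gt_eqF // gerBl exprn_ge0.
Qed.

Lemma eq0_of_norm_le_geometric (z C : R) : (forall n, `|z| <= C * g ^+ n) -> z = 0.
Proof.
move=> le_zC; apply/normr0_eq0/eqP; rewrite eq_le normr_ge0 andbT.
have geo := @cvg_geometric _ C g; rewrite ger0_norm // in geo.
rewrite -(cvg_lim _ (geo g_lt1)) //; apply: limr_ge; first exact: cvgP (geo g_lt1).
by near=> n; apply: le_zC.
Unshelve. all: by end_near.
Qed.

Section GeometricIncrements.
Variables (u : nat -> R) (c : R).
Hypothesis c_ge0 : 0 <= c.
Hypothesis du_le : forall n, `|u n.+1 - u n| <= c * g ^+ n.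

Lemma dist_le_geometric_increments n m : (n <= m)%N ->
  `|u m - u n| <= c * g ^+ n * (1 - g)^-1.
Proof.
have partial k : `|u (n + k)%N - u n| <= c * g ^+ n * \sum_(0 <= j < k) g ^+ j.
  elim: k => [|k IH]; first by rewrite addn0 subrr normr0 big_geq // mulr0.
  rewrite addnS big_nat_recr //= mulrDr -[c * _ * g ^+ k]mulrA -exprD.
  by rewrite (le_trans (ler_distD (u (n + k)%N) _ _)) // addrC lerD // distrC.
move=> /subnKC <-; apply: le_trans (partial _) _.
by rewrite ler_wpM2l ?mulr_ge0 ?exprn_ge0 ?sum_expr_le_inv.
Qed.

Let B := c * (1 - g)^-1.
Let B_ge0 : 0 <= B. Proof. by rewrite mulr_ge0 // invr_ge0 subr_ge0 ltW. Qed.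

Lemma cvgn_geometric_increments : cvgn u.
Proof.
pose w n := u n - B * g ^+ n.
have w_nd : nondecreasing_seq w.
  apply/nondecreasing_seqP => n; rewrite /w.
  have := du_le n; rewrite ler_norml => /andP[du_ge _].
  have -> : B * g ^+ n.+1 = B * g ^+ n - c * g ^+ n.
    by rewrite /B exprS; field; rewrite subr_eq0 gt_eqF.
  lra.
have w_ub : has_ubound (range w).
  exists (u 0%N + B) => _ [n _ <-].
  have := dist_le_geometric_increments (leq0n n).
  rewrite expr0 mulr1 -/B ler_distlC /w /= => /andP[le_u _].
  have : 0 <= B * g ^+ n by rewrite mulr_ge0 ?exprn_ge0.
  lra.
have -> : u = w \+ geometric B g by apply/funext => n /=; rewrite /w subrK.
apply: is_cvgD; first exact: nondecreasing_is_cvgn.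
by apply: cvgP (cvg_geometric _ _); rewrite ger0_norm.
Qed.

Lemma dist_limn_le_geometric_increments n :
  `|limn u - u n| <= c * g ^+ n * (1 - g)^-1.
Proof.
have cvg_u := cvgn_geometric_increments.
have tail_bound m := @dist_le_geometric_increments n m.
rewrite ler_distl; apply/andP; split; [apply: limr_ge | apply: limr_le] => //;
  near=> m; move: (tail_bound m); rewrite ler_distl => /(_ _)/andP[] //;
  by near: m; exists n.
Unshelve. all: by end_near.
Qed.

End GeometricIncrements.
End GeometricBounds.

Section MarkovOperators.
Variables (R : realType) (X A : finType).
Implicit Types (q : X -> A -> R) (L : (X -> A -> R) -> X -> A -> R).

Definition markov_op L : Prop :=
  [/\ forall c1 c2 q1 q2, L (fun x a => c1 * q1 x a + c2 * q2 x a) =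
                          (fun x a => c1 * L q1 x a + c2 * L q2 x a),
      forall q1 q2, (forall x a, q1 x a <= q2 x a) -> forall x a, L q1 x a <= L q2 x a
    & forall c, L (fun _ _ => c) = (fun _ _ => c)].

Lemma markov_op_id : markov_op id.
Proof. by []. Qed.

Lemma markov_op_comp L1 L2 : markov_op L1 -> markov_op L2 -> markov_op (L1 \o L2).
Proof.
move=> [lin1 le1 cst1] [lin2 le2 cst2]; split=> [c1 c2 q1 q2|q1 q2 le_q|c] /=.
- by rewrite lin2 lin1.
- by apply: le1; apply: le2.
- by rewrite cst2 cst1.
Qed.

Lemma markov_op_iter L n : markov_op L -> markov_op (iter n L).
Proof.
move=> hL; elim: n => [|n IH]; first exact: markov_op_id.
exact: markov_op_comp hL IH.
Qed.

Section Laws.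
Variable L : (X -> A -> R) -> X -> A -> R.
Hypothesis hL : markov_op L.

Lemma markov_op_le q1 q2 :
  (forall x a, q1 x a <= q2 x a) -> forall x a, L q1 x a <= L q2 x a.
Proof. by case: hL => _ + _; apply. Qed.

Lemma markov_op_cst c : L (fun _ _ => c) = (fun _ _ => c).
Proof. by case: hL. Qed.

Lemma markov_op_lin c1 c2 q1 q2 :
  L (fun x a => c1 * q1 x a + c2 * q2 x a) = (fun x a => c1 * L q1 x a + c2 * L q2 x a).
Proof. by case: hL. Qed.

Lemma markov_opD q1 q2 :
  L (fun x a => q1 x a + q2 x a) = (fun x a => L q1 x a + L q2 x a).
Proof.
have -> : (fun x a => q1 x a + q2 x a) = (fun x a => 1 * q1 x a + 1 * q2 x a).
  by apply/funeq2P => x a; rewrite !mul1r.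
by rewrite markov_op_lin; apply/funeq2P => x a; rewrite !mul1r.
Qed.

Lemma markov_opZ c q : L (fun x a => c * q x a) = (fun x a => c * L q x a).
Proof.
have -> : (fun x a => c * q x a) = (fun x a => c * q x a + 0 * q x a).
  by apply/funeq2P => x a; rewrite mul0r addr0.
by rewrite markov_op_lin; apply/funeq2P => x a; rewrite mul0r addr0.
Qed.

Lemma markov_opB q1 q2 :
  L (fun x a => q1 x a - q2 x a) = (fun x a => L q1 x a - L q2 x a).
Proof.
have -> : (fun x a => q1 x a - q2 x a) = (fun x a => 1 * q1 x a + -1 * q2 x a).
  by apply/funeq2P => x a; rewrite mul1r mulN1r.
by rewrite markov_op_lin; apply/funeq2P => x a; rewrite mul1r mulN1r.
Qed.

Lemma markov_op_sum (I : Type) (s : seq I) (F : I -> X -> A -> R) :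
  L (fun x a => \sum_(i <- s) F i x a) = (fun x a => \sum_(i <- s) L (F i) x a).
Proof.
elim: s => [|i s IH].
  by under eq_fun do under eq_fun do rewrite big_nil; rewrite markov_op_cst;
    apply/funeq2P => x a; rewrite big_nil.
under eq_fun do under eq_fun do rewrite big_cons.
by rewrite markov_opD IH; apply/funeq2P => x a; rewrite big_cons.
Qed.

Lemma markov_op_norm_le q (B : R) :
  (forall x a, `|q x a| <= B) -> forall x a, `|L q x a| <= B.
Proof.
move=> le_qB x a; have bounds x' a' : - B <= q x' a' <= B by rewrite -ler_norml.
rewrite ler_norml; apply/andP; split.
- have := @markov_op_le (fun _ _ => - B) q; rewrite markov_op_cst; apply=> // x' a'.
  by case/andP: (bounds x' a').
- have := @markov_op_le q (fun _ _ => B); rewrite markov_op_cst; apply=> // x' a'.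
  by case/andP: (bounds x' a').
Qed.

End Laws.
End MarkovOperators.

Section KernelAndPolicies.
Variables (R : realType) (X A : finType) (P : X -> A -> X -> R).
Hypothesis hP : is_kernel P.
Implicit Types (q : X -> A -> R) (v : X -> R) (pi : X -> A -> R).

Lemma Papp_lin c1 c2 v1 v2 :
  Papp P (fun z => c1 * v1 z + c2 * v2 z) =
  (fun x a => c1 * Papp P v1 x a + c2 * Papp P v2 x a).
Proof.
apply/funeq2P => x a; rewrite /Papp !mulr_sumr -big_split /=.
by apply: eq_bigr => z _; ring.
Qed.

Lemma Papp_le v1 v2 :
  (forall z, v1 z <= v2 z) -> forall x a, Papp P v1 x a <= Papp P v2 x a.
Proof. by move=> le_v x a; apply: ler_sum => z _; rewrite ler_wpM2l //; case: hP. Qed.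

Lemma Papp_cst c x a : Papp P (fun _ => c) x a = c.
Proof. by rewrite /Papp -mulr_suml; case: hP => _ ->; rewrite mul1r. Qed.

Lemma polapp_lin pi c1 c2 q1 q2 :
  polapp pi (fun x a => c1 * q1 x a + c2 * q2 x a) =
  (fun x => c1 * polapp pi q1 x + c2 * polapp pi q2 x).
Proof.
apply/funext => x; rewrite /polapp !mulr_sumr -big_split /=.
by apply: eq_bigr => b _; ring.
Qed.

Lemma polappD pi q1 q2 :
  polapp pi (fun x a => q1 x a + q2 x a) = (fun x => polapp pi q1 x + polapp pi q2 x).
Proof. by apply/funext => x; rewrite /polapp -big_split; apply: eq_bigr => b _; rewrite mulrDr. Qed.

Lemma polappZ pi c q : polapp pi (fun x a => c * q x a) = (fun x => c * polapp pi q x).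
Proof. by apply/funext => x; rewrite /polapp mulr_sumr; apply: eq_bigr => b _; rewrite mulrCA. Qed.

Lemma polapp_sum pi (I : Type) (s : seq I) (F : I -> X -> A -> R) :
  polapp pi (fun x a => \sum_(i <- s) F i x a) = (fun x => \sum_(i <- s) polapp pi (F i) x).
Proof.
apply/funext => x; rewrite /polapp exchange_big /=.
by apply: eq_bigr => b _; rewrite mulr_sumr.
Qed.

Section Policy.
Variable pi : X -> A -> R.
Hypothesis hpi : is_policy pi.

Lemma polapp_le q1 q2 :
  (forall x a, q1 x a <= q2 x a) -> forall x, polapp pi q1 x <= polapp pi q2 x.
Proof. by move=> le_q x; apply: ler_sum => b _; rewrite ler_wpM2l //; case: hpi. Qed.

Lemma polapp_cst c x : polapp pi (fun _ _ => c) x = c.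
Proof. by rewrite /polapp -mulr_suml; case: hpi => _ ->; rewrite mul1r. Qed.

Lemma polapp_le_max q x a : (forall b, q x b <= q x a) -> polapp pi q x <= q x a.
Proof.
move=> le_qa; rewrite -[leRHS](polapp_cst (q x a) x).
by apply: ler_sum => b _; rewrite ler_wpM2l //; case: hpi.
Qed.

Lemma Ppi_markov : markov_op (Ppi P pi).
Proof.
split=> [c1 c2 q1 q2|q1 q2 le_q|c]; rewrite /Ppi.
- by rewrite polapp_lin Papp_lin.
- by apply: Papp_le; apply: polapp_le.
- have -> : polapp pi (fun _ _ => c) = (fun _ => c) by apply/funext => x; apply: polapp_cst.
  by apply/funeq2P => x a; rewrite Papp_cst.
Qed.

End Policy.

Lemma polapp_detpol (d : X -> A) q x : polapp (detpol R d) q x = q x (d x).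
Proof.
rewrite /polapp (bigD1 (d x)) //= /detpol eqxx mul1r big1 ?addr0 // => b /negbTE ->.
by rewrite mul0r.
Qed.

Lemma detpol_policy (d : X -> A) : is_policy (detpol R d).
Proof.
split=> [x a|x]; first by rewrite /detpol; case: ifP.
by have := polapp_detpol d (fun _ _ => 1) x; rewrite /polapp; under eq_bigr do rewrite mulr1.
Qed.

Lemma polapp_markov_op_norm_le pi (L : (X -> A -> R) -> X -> A -> R) q (B : R) :
  is_policy pi -> markov_op L ->
  (forall x a, `|q x a| <= B) -> forall x, `|polapp pi (L q) x| <= B.
Proof.
move=> hpi hL q_bound x.
have Lq_bounds x' a' : - B <= L q x' a' <= B.
  by rewrite -ler_norml; apply: markov_op_norm_le.
rewrite ler_norml; apply/andP; split.
- rewrite -(polapp_cst hpi (- B) x); apply: polapp_le => // x' a'.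
  by case/andP: (Lq_bounds x' a').
- rewrite -(polapp_cst hpi B x); apply: polapp_le => // x' a'.
  by case/andP: (Lq_bounds x' a').
Qed.

End KernelAndPolicies.

Section PolicyValues.
Variables (R : realType) (X A : finType) (P : X -> A -> X -> R) (r : X -> A -> R) (gamma : R).
Hypothesis hP : is_kernel P.
Hypothesis r_bound : forall x a, -1 <= r x a <= 1.
Hypothesis gamma01 : 0 <= gamma < 1.

Let gamma_ge0 : 0 <= gamma. Proof. by case/andP: gamma01. Qed.

Lemma Tpi_subr pi q1 q2 x a : is_policy pi ->
  Tpi P r gamma pi q1 x a - Tpi P r gamma pi q2 x a =
  gamma * Ppi P pi (fun x a => q1 x a - q2 x a) x a.
Proof. by move=> hpi; rewrite (markov_opB (Ppi_markov hP hpi)) /Tpi; ring. Qed.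

Section Policy.
Variable pi : X -> A -> R.
Hypothesis hpi : is_policy pi.

Let u n := iter n (Tpi P r gamma pi) (fun _ _ => 0).

Let u_increment n x a : `|u n.+1 x a - u n x a| <= 1 * gamma ^+ n.
Proof.
rewrite mul1r; elim: n x a => [|n IH] x a.
  rewrite /u /= /Tpi (markov_op_cst (Ppi_markov hP hpi)) mulr0 addr0 subr0 expr0.
  by rewrite ler_norml.
rewrite [u n.+2]/u iterS -/(u n.+1) [u n.+1 in X in _ - X]/u iterS -/(u n).
rewrite Tpi_subr // normrM ger0_norm // exprS ler_wpM2l //.
exact: (markov_op_norm_le (Ppi_markov hP hpi)).
Qed.

Lemma qpi_dist_iter x a n : `|qpi P r gamma pi x a - u n x a| <= gamma ^+ n * H gamma.
Proof.
by have := dist_limn_le_geometric_increments gamma01 ler01 (fun n => u_increment n x a) n;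
  rewrite mul1r.
Qed.

Lemma qpi_norm_le x a : `|qpi P r gamma pi x a| <= H gamma.
Proof. by have := qpi_dist_iter x a 0; rewrite subr0 expr0 mul1r. Qed.

Lemma qpi_fixed : qpi P r gamma pi = Tpi P r gamma pi (qpi P r gamma pi).
Proof.
set q := qpi P r gamma pi; apply/funeq2P => x a; apply/esym/subr0_eq.
apply: (@eq0_of_norm_le_geometric _ gamma gamma01 _ (2 * H gamma * gamma)) => n.
have -> : Tpi P r gamma pi q x a - q x a =
    (Tpi P r gamma pi q x a - Tpi P r gamma pi (u n) x a) + (u n.+1 x a - q x a).
  by rewrite /u iterS; ring.
rewrite Tpi_subr //; apply: (le_trans (ler_normD _ _)).
have Ppi_dist : `|Ppi P pi (fun x a => q x a - u n x a) x a| <= gamma ^+ n * H gamma.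
  by apply: (markov_op_norm_le (Ppi_markov hP hpi)) => x' a'; apply: qpi_dist_iter.
have := qpi_dist_iter x a n.+1; rewrite distrC normrM ger0_norm // exprS.
have := ler_wpM2l gamma_ge0 Ppi_dist; lra.
Qed.

End Policy.

(* Minimum principle: at a minimiser of f, f >= gamma P^pi f >= gamma f. *)
Lemma Ppi_supersolution_ge0 pi (f : X -> A -> R) : is_policy pi ->
  (forall x a, gamma * Ppi P pi f x a <= f x a) -> forall x a, 0 <= f x a.
Proof.
move=> hpi super x a.
have [[x1 a1] _ min_f] := @Order.TotalTheory.arg_minP _ _ _ (x, a) xpredT
  (fun p : X * A => f p.1 p.2) isT.
have f_min_le_Ppi : f x1 a1 <= Ppi P pi f x1 a1.
  rewrite -[leLHS](congr1 (fun q => q x1 a1) (markov_op_cst (Ppi_markov hP hpi) (f x1 a1))).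
  by apply: (markov_op_le (Ppi_markov hP hpi)) => x2 a2; apply: (min_f (x2, a2)).
have gamma_lt1 : gamma < 1 by case/andP: gamma01.
have f_min_ge0 : 0 <= f x1 a1 by have := super x1 a1; have := gamma_ge0; nra.
exact: le_trans f_min_ge0 (min_f (x, a) isT).
Qed.

(* Policy improvement: the q-function of a policy greedy w.r.t. q^* dominates q^*. *)
Lemma qpi_le_vpi_opt pistar : is_optimal P r gamma pistar ->
  forall x a, qpi P r gamma pistar x a <= vpi P r gamma pistar x.
Proof.
move=> [hps opt] x a; set q := qpi P r gamma pistar.
pose d x := [arg max_(b > a) q x b]%O.
have d_max x' b : q x' b <= q x' (d x').
  by rewrite /d; case: Order.TotalTheory.arg_maxP => // c _; apply.
have hd := detpol_policy R d; set qd := qpi P r gamma (detpol R d).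
have q_le_qd x' b : q x' b <= qd x' b.
  rewrite -subr_ge0; move: x' b; apply: (Ppi_supersolution_ge0 hd) => x' b.
  have qd_eq := congr1 (fun f => f x' b) (qpi_fixed hd).
  have q_eq := congr1 (fun f => f x' b) (qpi_fixed hps).
  rewrite /Tpi /= -/q -/qd in qd_eq q_eq.
  rewrite (markov_opB (Ppi_markov hP hd)) [qd x' b]qd_eq [q x' b]q_eq.
  have : Ppi P pistar q x' b <= Ppi P (detpol R d) q x' b.
    apply: Papp_le => // z; rewrite polapp_detpol.
    exact: polapp_le_max.
  have := gamma_ge0; nra.
apply: le_trans (opt _ hd x); rewrite /vpi -/qd polapp_detpol.
exact: le_trans (d_max x a) (q_le_qd x (d x)).
Qed.

Lemma unroll_fixed_point (L : (X -> A -> R) -> X -> A -> R) q k : markov_op L ->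
  q = (fun x a => r x a + gamma * L q x a) ->
  q = (fun x a => \sum_(0 <= j < k) gamma ^+ j * iter j L r x a
                  + gamma ^+ k * iter k L q x a).
Proof.
move=> hL q_fix; elim: k => [|k IH].
  by apply/funeq2P => x a; rewrite big_geq // expr0 mul1r add0r.
have hLk := markov_op_iter k hL.
rewrite {1}IH {1}q_fix (markov_opD hLk) (markov_opZ hLk).
apply/funeq2P => x a; rewrite big_nat_recr //= -iterSr iterS exprS; ring.
Qed.

Lemma vpi_truncation pi k x : is_policy pi ->
  `|vpi P r gamma pi x - \sum_(0 <= j < k) gamma ^+ j * polapp pi (iter j (Ppi P pi) r) x|
    <= gamma ^+ k * H gamma.
Proof.
move=> hpi; have hL := Ppi_markov hP hpi.
rewrite /vpi [in X in polapp _ X](unroll_fixed_point k hL (qpi_fixed hpi)).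
rewrite polappD polapp_sum polappZ /=; under eq_bigr do rewrite polappZ.
rewrite addrC addKr normrM ger0_norm ?exprn_ge0 // ler_wpM2l ?exprn_ge0 //.
by apply: polapp_markov_op_norm_le (markov_op_iter k hL) _ _ => //; apply: qpi_norm_le.
Qed.

End PolicyValues.

Section DiscountAlgebra.
Variables (R : realType) (gamma alpha : R).

(* [Asum k] is the paper's A_k; [Bsum k] is what replacing the weights A_(k-j)/A_inf by 1
   costs in [discounted_sum_le_of_weighted]. *)
Definition Asum k : R := \sum_(0 <= j < k) alpha ^+ j.
Definition Bsum k : R := \sum_(0 <= j < k) gamma ^+ j * alpha ^+ (k - j).

Lemma Asum_succ k : Asum k.+1 = 1 + alpha * Asum k.
Proof.
rewrite /Asum big_nat_recl // expr0 mulr_sumr.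
by congr (_ + _); apply: eq_bigr => j _; rewrite exprS.
Qed.

Lemma Asum_mul_subr k : Asum k * (1 - alpha) = 1 - alpha ^+ k.
Proof.
elim: k => [|k IH]; first by rewrite /Asum big_geq // mul0r expr0 subrr.
by rewrite Asum_succ exprS mulrDl mulrBr -mulrA IH; ring.
Qed.

Lemma alpha_mul_A_gk k : alpha * A_gk gamma alpha k = gamma * Bsum k.
Proof.
rewrite /A_gk /Bsum !mulr_sumr big_nat_rev /=; apply: eq_big_nat => j /andP[_ lt_jk].
have -> : (k - (0 + k - j.+1))%N = j.+1 by lia.
have -> : (0 + k - j.+1)%N = (k - j).-1 by lia.
by rewrite !exprS -(prednK (_ : (0 < k - j)%N)) ?subn_gt0 // exprS; ring.
Qed.

Lemma Bsum_add_expr k : Bsum k + gamma ^+ k = A_gk gamma alpha k + alpha ^+ k.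
Proof.
have -> : Bsum k + gamma ^+ k = \sum_(0 <= j < k.+1) gamma ^+ j * alpha ^+ (k - j).
  by rewrite big_nat_recr //= subnn expr0 mulr1.
have -> : A_gk gamma alpha k + alpha ^+ k = \sum_(0 <= j < k.+1) gamma ^+ (k - j) * alpha ^+ j.
  by rewrite /A_gk big_nat_recr //= subnn expr0 mul1r.
rewrite big_nat_rev /=; apply: eq_big_nat => j /andP[_ lt_jk].
by rewrite add0n subSS (_ : (k - (k - j))%N = j) 1?mulrC //; lia.
Qed.

Lemma Gamma_const_eq k : gamma < 1 ->
  2 * H gamma * (alpha ^+ k + A_gk gamma alpha k / A_inf alpha) =
  2 * Bsum k + 2 * gamma ^+ k * H gamma.
Proof.
move=> gamma_lt1; have := alpha_mul_A_gk k; have := Bsum_add_expr k.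
rewrite /A_inf /H invrK => add_eq mul_eq.
have -> : alpha ^+ k + A_gk gamma alpha k * (1 - alpha) = (1 - gamma) * Bsum k + gamma ^+ k.
  lra.
by field; rewrite subr_eq0 gt_eqF.
Qed.

Lemma discounted_sum_le_of_weighted (c e : nat -> R) k :
  0 <= gamma -> 0 <= alpha < 1 -> (forall j, `|c j| <= 2) ->
  0 <= \sum_(0 <= j < k) gamma ^+ j * (Asum (k - j) * c j + e j) ->
  - \sum_(0 <= j < k) gamma ^+ j * c j <=
    (1 - alpha) * \sum_(0 <= j < k) gamma ^+ j * e j + 2 * Bsum k.
Proof.
move=> gamma_ge0 /andP[alpha_ge0 alpha_lt1] c_bound weighted_ge0.
have termwise j : (1 - alpha) * (gamma ^+ j * (Asum (k - j) * c j + e j)) <=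
    gamma ^+ j * c j + (1 - alpha) * (gamma ^+ j * e j) + 2 * (gamma ^+ j * alpha ^+ (k - j)).
  rewrite -subr_ge0.
  have -> : forall t, gamma ^+ j * c j + (1 - alpha) * (gamma ^+ j * e j) +
      2 * (gamma ^+ j * alpha ^+ (k - j)) - (1 - alpha) * (gamma ^+ j * (t * c j + e j)) =
      gamma ^+ j * (1 - t * (1 - alpha)) * c j + 2 * (gamma ^+ j * alpha ^+ (k - j)).
    by move=> t; ring.
  rewrite Asum_mul_subr (_ : 1 - (1 - alpha ^+ (k - j)) = alpha ^+ (k - j)); last by ring.
  have : 0 <= gamma ^+ j * alpha ^+ (k - j) by rewrite mulr_ge0 // exprn_ge0.
  have := c_bound j; rewrite ler_norml; nra.
have summed : \sum_(0 <= j < k) (1 - alpha) * (gamma ^+ j * (Asum (k - j) * c j + e j)) <=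
    \sum_(0 <= j < k) (gamma ^+ j * c j + (1 - alpha) * (gamma ^+ j * e j)
                       + 2 * (gamma ^+ j * alpha ^+ (k - j))).
  by apply: ler_sum => j _; apply: termwise.
rewrite -mulr_sumr !big_split /= -!mulr_sumr -/(Bsum k) in summed.
have : 0 <= (1 - alpha) * \sum_(0 <= j < k) gamma ^+ j * (Asum (k - j) * c j + e j).
  by rewrite mulr_ge0 // subr_ge0 ltW.
lra.
Qed.

End DiscountAlgebra.

Section GreedyChains.
Variables (R : realType) (X A : finType) (P : X -> A -> X -> R) (r : X -> A -> R).
Variables (gamma : R) (g : nat -> X -> A).
Hypothesis hP : is_kernel P.
Hypothesis r_bound : forall x a, -1 <= r x a <= 1.
Hypothesis gamma01 : 0 <= gamma < 1.

Local Notation pol := (pol_ R g).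

Lemma pol_policy k : is_policy (pol k).
Proof. exact: detpol_policy. Qed.

Lemma Pchain_markov j n : markov_op (Pchain P g j n).
Proof.
elim: n => [|n IH]; first exact: markov_op_id.
exact: markov_op_comp (Ppi_markov hP (pol_policy _)) IH.
Qed.

Lemma Tchain_Tpi_unroll n q :
  Tchain P r gamma g n (Tpi P r gamma (pol 0) q) =
  (fun x a => \sum_(0 <= j < n.+1) gamma ^+ j * Pchain P g (n.+1 - j) j r x a
              + gamma ^+ n.+1 * Pchain P g 0 n.+1 q x a).
Proof.
elim: n => [|n IH]; first by apply/funeq2P => x a; rewrite big_nat1 mul1r.
have hPn := Ppi_markov hP (pol_policy n.+1).
rewrite [LHS]/= IH /Tpi (markov_opD hPn) (markov_op_sum hPn) (markov_opZ hPn).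
apply/funeq2P => x a; under eq_bigr do rewrite (markov_opZ hPn).
rewrite [in RHS]big_nat_recl // expr0 mul1r mulrDr mulr_sumr addrA.
congr (_ + _ + _); last by rewrite mulrA -exprS.
apply: eq_big_nat => j /andP[_ lt_jn]; rewrite mulrA -exprS subSS /=.
by rewrite subnK // ltnW.
Qed.

Section OptimalComparison.
Variable pistar : X -> A -> R.
Hypothesis hopt : is_optimal P r gamma pistar.

Local Notation qs := (qpi P r gamma pistar).
Local Notation vs := (vpi P r gamma pistar).

Lemma polapp_le_vpi_opt pi q : is_policy pi ->
  (forall x a, q x a <= qs x a) -> forall x, polapp pi q x <= vs x.
Proof.
move=> hpi le_q x.
have <- : polapp pi (fun x' _ => vs x') x = vs x := polapp_cst hpi (vs x) x.
apply: polapp_le => // x' a; apply: le_trans (le_q x' a) _.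
exact: qpi_le_vpi_opt.
Qed.

Lemma qpi_le_qpi_opt pi : is_policy pi ->
  forall x a, qpi P r gamma pi x a <= qs x a.
Proof.
move=> hpi x a; rewrite (qpi_fixed hP r_bound gamma01 hpi) (qpi_fixed hP r_bound gamma01 hopt.1).
rewrite /Tpi lerD2l ler_wpM2l //; first by case/andP: gamma01.
by apply: Papp_le => // z; apply: hopt.2.
Qed.

Lemma Tpi_le_qpi_opt pi q : is_policy pi ->
  (forall x a, q x a <= qs x a) -> forall x a, Tpi P r gamma pi q x a <= qs x a.
Proof.
move=> hpi le_q x a; rewrite (qpi_fixed hP r_bound gamma01 hopt.1).
rewrite /Tpi lerD2l ler_wpM2l //; first by case/andP: gamma01.
by apply: Papp_le => // z; apply: polapp_le_vpi_opt.
Qed.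

Lemma v_nonstat_le_vpi_opt k x : v_nonstat P r gamma g k x <= vs x.
Proof.
have Tchain_le n : forall x a, Tchain P r gamma g n (qpi P r gamma (pol 0)) x a <= qs x a.
  elim: n => [|n IH]; first exact: qpi_le_qpi_opt (pol_policy 0).
  exact: Tpi_le_qpi_opt (pol_policy n.+1) IH.
exact: polapp_le_vpi_opt (pol_policy k) (Tchain_le k.-1) x.
Qed.

End OptimalComparison.

Lemma v_nonstat_truncation k x :
  `|v_nonstat P r gamma g k.+1 x -
    \sum_(0 <= j < k.+1) gamma ^+ j * polapp (pol k.+1) (Pchain P g (k.+1 - j) j r) x|
    <= gamma ^+ k.+1 * H gamma.
Proof.
rewrite /v_nonstat succnK (qpi_fixed hP r_bound gamma01 (pol_policy 0)) Tchain_Tpi_unroll.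
rewrite polappD polapp_sum polappZ; under eq_bigr do rewrite polappZ.
rewrite addrC addKr normrM ger0_norm ?exprn_ge0 ?ler_wpM2l ?exprn_ge0 //; try by case/andP: gamma01.
exact: (polapp_markov_op_norm_le (pol_policy k.+1) (Pchain_markov 0 k.+1)
  (qpi_norm_le hP r_bound gamma01 (pol_policy 0))).
Qed.

End GreedyChains.

Section MDVI.
Variables (R : realType) (X A : finType) (P : X -> A -> X -> R) (r : X -> A -> R).
Variables (gamma alpha : R) (M K : nat) (a0 : A) (y : nat -> 'I_M -> X -> A -> X).
Variables (g : nat -> X -> A) (pistar : X -> A -> R).
Hypothesis hP : is_kernel P.
Hypothesis r_bound : forall x a, -1 <= r x a <= 1.
Hypothesis gamma01 : 0 <= gamma < 1.
Hypothesis alpha01 : 0 <= alpha < 1.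
Hypothesis greedy : forall k, (k <= K)%N -> forall x a,
  s_ r gamma alpha a0 y k x a <= s_ r gamma alpha a0 y k x (g k x).
Hypothesis pistar_policy : is_policy pistar.

Local Notation s := (s_ r gamma alpha a0 y).
Local Notation w := (w_ r gamma alpha a0 y).
Local Notation wp := (wprev_ r gamma alpha a0 y).
Local Notation v := (v_ r gamma alpha a0 y).
Local Notation E := (E_ P r gamma alpha a0 y).
Local Notation eps := (eps_ P r gamma alpha a0 y).
Local Notation pol := (pol_ R g).
Local Notation PS := (Ppi P pistar).
(* The operators pi_k P_(k-j)^(k-1) and pi_* P_*^j of Gamma_k, evaluated at x. *)
Local Notation U k j q x := (polapp (pol k) (Pchain P g (k - j) j q) x).
Local Notation L j q x := (polapp pistar (iter j PS q) x).

Let gamma_ge0 : 0 <= gamma. Proof. by case/andP: gamma01. Qed.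

Lemma s_succ k : s k.+1 = (fun x a => r x a + gamma * Phat y k (v k) x a + alpha * s k x a).
Proof. by rewrite /s_ /v_ /w_ /wprev_ /=; case: (mdvi_state _ _ _ _ _ k) => [[]]. Qed.

Lemma wprev_succ k : wp k.+1 = w k.
Proof. by rewrite /w_ /wprev_ /=; case: (mdvi_state _ _ _ _ _ k) => [[]]. Qed.

Lemma w_maxA k : w k = Defs.maxA a0 (s k).
Proof.
case: k => [|k]; last by rewrite /w_ /s_ /=; case: (mdvi_state _ _ _ _ _ k) => [[]].
apply/funext => x; apply/le_anti/andP; split; rewrite /w_ /s_ /Defs.maxA /=.
- exact: (le_bigmax _ (fun _ => 0) a0).
- exact: bigmax_le.
Qed.

Lemma E_succ k : E k.+1 = (fun x a => eps k.+1 x a + alpha * E k x a).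
Proof.
apply/funeq2P => x a; rewrite /E_ big_nat_recr //= subnn expr0 mul1r addrC mulr_sumr.
by congr (_ + _); apply: eq_big_nat => j /andP[_ le_jk]; rewrite subSn // exprS mulrA.
Qed.

Lemma s_decomp k :
  s k = (fun x a => Asum alpha k * r x a + gamma * Papp P (wp k) x a + E k x a).
Proof.
elim: k => [|k IH].
  apply/funeq2P => x a; rewrite /wprev_ /= Papp_cst // /E_ /Asum !big_geq //.
  by rewrite mul0r mulr0 !addr0.
rewrite s_succ IH E_succ wprev_succ Asum_succ; apply/funeq2P => x a.
have v_eq : v k = (fun z => 1 * w k z + - alpha * wp k z).
  by apply/funext => z; rewrite /v_ mul1r mulNr.
rewrite /eps_ /= v_eq Papp_lin //; ring.
Qed.

Lemma w_greedy k : (k <= K)%N -> w k = polapp (pol k) (s k).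
Proof.
move=> le_kK; apply/funext => x; rewrite w_maxA polapp_detpol /Defs.maxA.
apply/le_anti/andP; split; last exact: le_bigmax.
by apply: bigmax_le => [|b _]; apply: greedy.
Qed.

Definition F_ k : X -> A -> R := fun x a => Asum alpha k * r x a + E k x a.

Lemma s_succ_greedy k : (k < K)%N ->
  s k.+1 = (fun x a => F_ k.+1 x a + gamma * Ppi P (pol k) (s k) x a).
Proof.
move=> lt_kK; rewrite s_decomp wprev_succ (w_greedy (ltnW lt_kK)).
by apply/funeq2P => x a; rewrite /F_ /Ppi addrAC.
Qed.

Lemma s_unroll k : (k <= K)%N ->
  s k = (fun x a => \sum_(0 <= j < k) gamma ^+ j * Pchain P g (k - j) j (F_ (k - j)) x a).
Proof.
elim: k => [|k IH] le_kK; first by apply/funeq2P => x a; rewrite big_geq.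
have hPk := Ppi_markov hP (pol_policy R g k).
rewrite s_succ_greedy // (IH (ltnW le_kK)) (markov_op_sum hPk).
apply/funeq2P => x a; under eq_bigr do rewrite (markov_opZ hPk).
rewrite [in RHS]big_nat_recl // subn0 expr0 mul1r mulr_sumr; congr (_ + _).
apply: eq_big_nat => j /andP[_ lt_jk]; rewrite mulrA -exprS subSS /=.
by rewrite subnK // ltnW.
Qed.

Lemma s_ge_opt_unroll k : (k <= K)%N -> forall x a,
  \sum_(0 <= j < k) gamma ^+ j * iter j PS (F_ (k - j)) x a <= s k x a.
Proof.
have hPS := Ppi_markov hP pistar_policy.
elim: k => [|k IH] le_kK x a; first by rewrite big_geq.
rewrite s_succ_greedy // big_nat_recl // subn0 expr0 mul1r lerD2l.
apply: le_trans (ler_wpM2l gamma_ge0 (_ : PS (s k) x a <= _)); last first.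
  apply: Papp_le => // z; rewrite polapp_detpol.
  exact: polapp_le_max pistar_policy _ _ _ (greedy (ltnW le_kK) z).
apply: le_trans (ler_wpM2l gamma_ge0 (markov_op_le hPS (IH (ltnW le_kK)) x a)).
rewrite (markov_op_sum hPS) mulr_sumr; apply: ler_sum => j _.
by rewrite (markov_opZ hPS) subSS exprS mulrA.
Qed.

Lemma polapp_s_unroll k x : (k <= K)%N ->
  polapp (pol k) (s k) x =
  \sum_(0 <= j < k) gamma ^+ j * (Asum alpha (k - j) * U k j r x + U k j (E (k - j)) x).
Proof.
move=> le_kK; rewrite s_unroll // polapp_sum; apply: eq_big_nat => j _.
have hP_kj := Pchain_markov g hP (k - j) j.
by rewrite polappZ /F_ (markov_opD hP_kj) (markov_opZ hP_kj) polappD polappZ.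
Qed.

Lemma polapp_opt_s_ge k x : (k <= K)%N ->
  \sum_(0 <= j < k) gamma ^+ j * (Asum alpha (k - j) * L j r x + L j (E (k - j)) x)
    <= polapp pistar (s k) x.
Proof.
move=> le_kK; apply: le_trans (polapp_le pistar_policy (s_ge_opt_unroll le_kK) x).
rewrite polapp_sum; apply: ler_sum => j _.
have hPSj := markov_op_iter j (Ppi_markov hP pistar_policy).
by rewrite polappZ /F_ (markov_opD hPSj) (markov_opZ hPSj) polappD polappZ.
Qed.

Lemma weighted_gap_ge0 k x : (k <= K)%N ->
  0 <= \sum_(0 <= j < k) gamma ^+ j *
         (Asum alpha (k - j) * (U k j r x - L j r x) + (U k j (E (k - j)) x - L j (E (k - j)) x)).
Proof.
move=> le_kK; have greedy_le : polapp pistar (s k) x <= polapp (pol k) (s k) x.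
  by rewrite polapp_detpol; exact: polapp_le_max pistar_policy _ _ _ (greedy le_kK x).
have := le_trans (polapp_opt_s_ge x le_kK) greedy_le.
rewrite polapp_s_unroll // -subr_ge0 -sumrB; congr (0 <= _).
by apply: eq_bigr => j _; ring.
Qed.

Lemma vpi_sub_v_nonstat_le_Gamma k x : (k < K)%N ->
  vpi P r gamma pistar x - v_nonstat P r gamma g k.+1 x <=
    Gamma_ P r gamma alpha a0 y g pistar k.+1 x.
Proof.
move=> lt_kK.
have reward_gap j : `|U k.+1 j r x - L j r x| <= 2.
  have r_norm x' a : `|r x' a| <= 1 by rewrite ler_norml.
  have hPSj := markov_op_iter j (Ppi_markov hP pistar_policy).
  apply: le_trans (ler_normB _ _) _; rewrite -[2](@natrD R 1 1) lerD //.
  - exact: polapp_markov_op_norm_le (pol_policy R g k.+1) (Pchain_markov g hP _ j) r_norm x.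
  - exact: polapp_markov_op_norm_le pistar_policy hPSj r_norm x.
have := discounted_sum_le_of_weighted gamma_ge0 alpha01 reward_gap (weighted_gap_ge0 x lt_kK).
have := vpi_truncation hP r_bound gamma01 k.+1 x pistar_policy.
have := v_nonstat_truncation g hP r_bound gamma01 k x.
rewrite /Gamma_ Gamma_const_eq; last by case/andP: gamma01.
rewrite /A_inf invrK !ler_distl => /andP[v_nonstat_ge _] /andP[_ vpi_le].
have -> : \sum_(0 <= j < k.+1) gamma ^+ j * (U k.+1 j r x - L j r x) =
    \sum_(0 <= j < k.+1) gamma ^+ j * U k.+1 j r x - \sum_(0 <= j < k.+1) gamma ^+ j * L j r x.
  by rewrite -sumrB; apply: eq_bigr => j _; rewrite mulrBr.
lra.
Qed.

End MDVI.

Unset Implicit Arguments.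

Theorem lemma1 (R : realType) (X A : finType) (a0 : A)
  (P : X -> A -> X -> R) (r : X -> A -> R) (gamma alpha : R) (K M : nat)
  (y : nat -> 'I_M -> X -> A -> X) (g : nat -> X -> A) (pistar : X -> A -> R) :
  is_kernel P ->
  (forall x a, -1 <= r x a <= 1) ->
  0 <= gamma < 1 ->
  0 <= alpha < 1 ->
  (0 < K)%N -> (0 < M)%N ->
  is_optimal P r gamma pistar ->
  (* pi_k is a deterministic greedy policy w.r.t. s_k, k = 0..K *)
  (forall k, (k <= K)%N -> forall x a,
      s_ r gamma alpha a0 y k x a <= s_ r gamma alpha a0 y k x (g k x)) ->
  forall k, (1 <= k <= K)%N -> forall x,
    0 <= vpi P r gamma pistar x - v_nonstat P r gamma g k x /\
    vpi P r gamma pistar x - v_nonstat P r gamma g k x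
      <= Gamma_ P r gamma alpha a0 y g pistar k x.
Proof.
move=> hP r_bound gamma01 alpha01 _ _ hopt greedy [//|k] /andP[_ lt_kK] x.
split; first by rewrite subr_ge0; apply: v_nonstat_le_vpi_opt.
exact: (vpi_sub_v_nonstat_le_Gamma hP r_bound gamma01 alpha01 greedy hopt.1 x lt_kK).
Qed.
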